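(* Let $(\mathcal A,\lambda_0,S_0)$ be a non-periodic substitution datum over a dilation datum $(G,d,(D_\lambda)_{\lambda>0},\Gamma,V)$, with $D:=D_{\lambda_0}$ and substitution map $S:\mathcal A^\Gamma\to\mathcal A^\Gamma$. Then for each $n\in\mathbb N$, every $\gamma\in\Gamma\setminus D^n(\Gamma)$ and all $\omega_1,\omega_2\in\mathcal A^\Gamma$, \[\big(\gamma^{-1}S^n(\omega_1)\big)|_{V(n)\cap\Gamma}\neq S^n(\omega_2)|_{V(n)\cap\Gamma}.\]
   Context: Dilation datum $(G,d,(D_\lambda),\Gamma,V)$: $G$ connected lcsc group, $d$ left-invariant metric inducing the topology, $\lambda\mapsto D_\lambda$ homomorphism $(\mathbb R_{>0},\cdot)\to\mathrm{Aut}(G)$ with $d(D_\lambda g,D_\lambda h)=\lambda d(g,h)$; $\Gamma$ uniform lattice with $D_\lambda(\Gamma)\subset\Gamma$ for some $\lambda>1$; $V$ bounded Borel set containing an open identity neighbourhood with $G=\bigsqcup_{\gamma\in\Gamma}\gamma V$. Substitution datum $(\mathcal A,\lambda_0,S_0)$: finite $\mathcal A$, $\lambda_0>1+r_+/r_-$ for some $0<r_-<r_+$ with $B(e,r_-)\subset V\subset B(e,r_+)$, $D(\Gamma)\subset\Gamma$, $S_0:\mathcal A\to\mathcal A^{D(V)\cap\Gamma}$. Patches are $P\in\mathcal A^M$, $M\subset\Gamma$; $P_a$ has support $\{e\}$ and value $a$; $\Gamma$ acts by $(\gamma P)(x)=P(\gamma^{-1}x)$, $\mathrm{supp}(\gamma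 P)=\gamma\,\mathrm{supp}P$; $P|_F$ is restriction to $\mathrm{supp}P\cap F$. Substitution map: $\mathrm{supp}S(P)=D(\mathrm{supp}(P)V)\cap\Gamma$, $S(P)(\gamma)=S_0(P(\eta))(D(\eta)^{-1}\gamma)$ for the unique $\eta\in\mathrm{supp}P$ with $\gamma\in D(\eta)(D(V)\cap\Gamma)$. Non-periodic: $S_0$ injective and $(\gamma^{-1}S(P_a))|_{\gamma^{-1}D(V)\cap D(V)}\neq S(P_b)|_{\gamma^{-1}D(V)\cap D(V)}$ for all $\gamma\in(D(V)\cap\Gamma)\setminus\{e\}$, $a,b\in\mathcal A$. $V(0):=V$, $V(n):=D((V(n-1)\cap\Gamma)V)$. *)

From Stdlib Require Export Reals List ClassicalEpsilon FinFun.
Open Scope R_scope.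
Set Implicit Arguments.

(** An abstract (possibly infinite) group: left identity and left inverse suffice. *)
Record Group := {
  carrier :> Type;
  gmul : carrier -> carrier -> carrier;
  ginv : carrier -> carrier;
  gone : carrier;
  gmul_assoc : forall x y z, gmul x (gmul y z) = gmul (gmul x y) z;
  gmul_1l : forall x, gmul gone x = x;
  gmul_Vl : forall x, gmul (ginv x) x = gone }.
Arguments gmul {g}.
Arguments ginv {g}.
Arguments gone {g}.

Section Topology.
Context {G : Group} (d : G -> G -> R).

Definition is_metric : Prop :=
  (forall x y, 0 <= d x y) /\ (forall x y, d x y = 0 <-> x = y) /\
  (forall x y, d x y = d y x) /\ (forall x y z, d x z <= d x y + d y z).

Definition left_invariant : Prop := forall g x y, d (gmul g x) (gmul g y) = d x y.

Definition is_open (U : G -> Prop) : Prop :=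
  forall x, U x -> exists r, 0 < r /\ forall y, d x y < r -> U y.

Definition is_compact (K : G -> Prop) : Prop :=
  forall (I : Type) (U : I -> G -> Prop), (forall i, is_open (U i)) ->
  (forall x, K x -> exists i, U i x) ->
  exists l : list I, forall x, K x -> exists i, In i l /\ U i x.

Definition is_connected : Prop :=
  forall U, is_open U -> is_open (fun x => ~ U x) ->
  (forall x, U x) \/ (forall x, ~ U x).

Definition locally_compact : Prop :=
  forall x, exists K, is_compact K /\ exists r, 0 < r /\ forall y, d x y < r -> K y.

Definition second_countable : Prop :=
  exists B : nat -> G -> Prop, (forall n, is_open (B n)) /\
  forall U x, is_open U -> U x -> exists n, B n x /\ forall y, B n y -> U y.

Definition topological_group : Prop :=
  (forall x y eps, 0 < eps -> exists del, 0 < del /\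
     forall x' y', d x x' < del -> d y y' < del -> d (gmul x y) (gmul x' y') < eps) /\
  (forall x eps, 0 < eps -> exists del, 0 < del /\
     forall x', d x x' < del -> d (ginv x) (ginv x') < eps).

Definition is_borel (A : G -> Prop) : Prop :=
  forall Sigma : (G -> Prop) -> Prop,
  (forall B C, (forall x, B x <-> C x) -> Sigma B -> Sigma C) ->
  (forall U, is_open U -> Sigma U) ->
  (forall B, Sigma B -> Sigma (fun x => ~ B x)) ->
  (forall F : nat -> G -> Prop, (forall n, Sigma (F n)) -> Sigma (fun x => exists n, F n x)) ->
  Sigma A.

Definition is_bounded (A : G -> Prop) : Prop :=
  exists r, forall x, A x -> d gone x <= r.

End Topology.

Section GroupDefs.
Context {G : Group}.

Definition subgroup (H : G -> Prop) : Prop :=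
  H gone /\ (forall x y, H x -> H y -> H (gmul x y)) /\ (forall x, H x -> H (ginv x)).

(** uniform lattice: discrete cocompact subgroup *)
Definition uniform_lattice (d : G -> G -> R) (Gam : G -> Prop) : Prop :=
  subgroup Gam /\
  (exists U, is_open d U /\ U gone /\ forall g, U g -> Gam g -> g = gone) /\
  (exists K, is_compact d K /\ forall g, exists γ k, Gam γ /\ K k /\ g = gmul γ k).

Definition group_aut (f : G -> G) : Prop :=
  (forall x y, f (gmul x y) = gmul (f x) (f y)) /\ Bijective f.

Definition img (f : G -> G) (X : G -> Prop) : G -> Prop :=
  fun y => exists x, X x /\ y = f x.

End GroupDefs.

Record dilation_datum (G : Group) (d : G -> G -> R) (Dil : R -> G -> G)
    (Gam V : G -> Prop) : Prop := {
  dd_metric : is_metric d;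
  dd_left_inv : left_invariant d;
  dd_topgroup : topological_group d;
  dd_connected : is_connected d;
  dd_loc_compact : locally_compact d;
  dd_second_countable : second_countable d;
  dd_aut : forall l, 0 < l -> group_aut (Dil l);
  dd_hom : forall l m, 0 < l -> 0 < m -> forall x, Dil (l * m) x = Dil l (Dil m x);
  dd_scale : forall l, 0 < l -> forall g h, d (Dil l g) (Dil l h) = l * d g h;
  dd_lattice : uniform_lattice d Gam;
  dd_Gam_dil : exists l, 1 < l /\ forall g, Gam g -> Gam (Dil l g);
  dd_V_bounded : is_bounded d V;
  dd_V_borel : is_borel d V;
  dd_V_nbhd : exists U, is_open d U /\ U gone /\ forall g, U g -> V g;
  dd_tiling : forall g, exists! γ, Gam γ /\ V (gmul (ginv γ) g) }.

(** Patches: partial maps G -> A; supp P = {x | P x <> None}. *)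
Section Patches.
Context {G : Group} {A : Type}.

Definition patch := G -> option A.

(** configurations in A^Gam: patches with support exactly Gam *)
Definition configuration (Gam : G -> Prop) (w : patch) : Prop :=
  forall x, w x <> None <-> Gam x.

Definition act (γ : G) (P : patch) : patch := fun x => P (gmul (ginv γ) x).

Definition restrict (P : patch) (F : G -> Prop) : patch :=
  fun x => if excluded_middle_informative (F x) then P x else None.

Definition Pa (a : A) : patch :=
  fun x => if excluded_middle_informative (x = gone) then Some a else None.

(** substitution map: supp S(P) = D(supp(P) V) ∩ Gam,
    S(P)(γ) = S0(P(η))(D(η)^{-1} γ) for the (unique) η ∈ supp P with
    γ ∈ D(η)(D(V) ∩ Gam). *)
Definition subst_cond (D : G -> G) (Gam V : G -> Prop) (P : patch) (γ η : G) : Prop :=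
  P η <> None /\ Gam (gmul (ginv (D η)) γ) /\ img D V (gmul (ginv (D η)) γ).

Definition subst (D : G -> G) (Gam V : G -> Prop) (S0 : A -> patch) (P : patch) : patch :=
  fun γ =>
  match excluded_middle_informative (exists η, subst_cond D Gam V P γ η) with
  | left H =>
      let η := proj1_sig (constructive_indefinite_description _ H) in
      match P η with
      | Some a => S0 a (gmul (ginv (D η)) γ)
      | None => None
      end
  | right _ => None
  end.

End Patches.

Fixpoint Vn {G : Group} (D : G -> G) (Gam V : G -> Prop) (n : nat) : G -> Prop :=
  match n with
  | O => V
  | S k => fun y => exists γ v, Vn D Gam V k γ /\ Gam γ /\ V v /\ y = D (gmul γ v)
  end.

Record substitution_datum (G : Group) (d : G -> G -> R) (Dil : R -> G -> G)
    (Gam V : G -> Prop) (A : Type) (l0 : R) (S0 : A -> @patch G A) : Prop := {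
  sd_finite : Finite A;
  sd_l0 : exists rm rp, 0 < rm /\ rm < rp /\
            (forall g, d gone g < rm -> V g) /\ (forall g, V g -> d gone g < rp) /\
            1 + rp / rm < l0;
  sd_DGam : forall g, Gam g -> Gam (Dil l0 g);
  sd_S0_supp : forall a x, S0 a x <> None <-> (Gam x /\ img (Dil l0) V x) }.

Definition nonperiodic (G : Group) (Dil : R -> G -> G) (Gam V : G -> Prop)
    (A : Type) (l0 : R) (S0 : A -> @patch G A) : Prop :=
  (forall a b, S0 a = S0 b -> a = b) /\
  forall (γ : G) (a b : A), Gam γ -> img (Dil l0) V γ -> γ <> gone ->
    let F := fun x => img (fun y => gmul (ginv γ) y) (img (Dil l0) V) x /\ img (Dil l0) V x in
    restrict (act (ginv γ) (subst (Dil l0) Gam V S0 (Pa a))) F <>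
    restrict (subst (Dil l0) Gam V S0 (Pa b)) F.

(** The substitution S inflates a configuration by D and replaces every tile η by the
    patch S0 (ω η) placed at D η.  Write γ = D η · δ with η ∈ Γ and δ ∈ D(V) ∩ Γ.  If
    δ = e then γ ∉ Dⁿ(Γ) forces η ∉ Dⁿ⁻¹(Γ), so by induction Sⁿ⁻¹ ω₁ shifted by η and
    Sⁿ⁻¹ ω₂ disagree at some tile x ∈ V(n-1); as S0 is injective their images under S
    disagree somewhere in the supertile D x · (D(V) ∩ Γ) ⊂ V(n).  If δ ≠ e the two supertiles at e
    are compared with an offset δ, which non-periodicity forbids. *)
From Stdlib Require Import Classical FunctionalExtensionality Lra.

Section GroupFacts.
Context {G : Group}.

Lemma mulgV (x : G) : gmul x (ginv x) = gone.
Proof.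
  rewrite <- (gmul_1l G (gmul x (ginv x))), <- (gmul_Vl G (ginv x)) at 1.
  rewrite <- gmul_assoc, (gmul_assoc G (ginv x) x (ginv x)), gmul_Vl, gmul_1l.
  apply gmul_Vl.
Qed.

Lemma mulg1 (x : G) : gmul x gone = x.
Proof. rewrite <- (gmul_Vl G x), gmul_assoc, mulgV, gmul_1l. reflexivity. Qed.

Lemma invgK (x : G) : ginv (ginv x) = x.
Proof.
  rewrite <- (mulg1 (ginv (ginv x))), <- (gmul_Vl G x), gmul_assoc, gmul_Vl, gmul_1l.
  reflexivity.
Qed.

Lemma mulKg (x y : G) : gmul (ginv x) (gmul x y) = y.
Proof. rewrite gmul_assoc, gmul_Vl, gmul_1l. reflexivity. Qed.

Lemma mulKVg (x y : G) : gmul x (gmul (ginv x) y) = y.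
Proof. rewrite gmul_assoc, mulgV, gmul_1l. reflexivity. Qed.

Lemma morph1 {f : G -> G} :
  (forall x y, f (gmul x y) = gmul (f x) (f y)) -> f gone = gone.
Proof.
  intros f_morph. pose proof (f_morph gone gone) as E. rewrite gmul_1l in E.
  rewrite <- (mulKg (f gone) (f gone)), <- E. apply gmul_Vl.
Qed.

End GroupFacts.

Lemma fun_neq_witness {X Y : Type} (f g : X -> Y) : f <> g -> exists x, f x <> g x.
Proof.
  intros Hfg. apply NNPP. intros Hnone. apply Hfg, functional_extensionality.
  intros x. apply NNPP. intros Hx. apply Hnone. eauto.
Qed.

Lemma configuration_Some {G : Group} {A : Type} {Gam : G -> Prop} {w : @patch G A} {x : G} :
  configuration Gam w -> Gam x -> exists a, w x = Some a.
Proof.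
  intros Hw Hx. destruct (w x) as [a|] eqn:E; eauto.
  exfalso. apply (proj2 (Hw x) Hx). assumption.
Qed.

Section Substitution.
Variables (G : Group) (A : Type) (D : G -> G) (Gam V : G -> Prop) (S0 : A -> @patch G A).
Hypothesis Gam_subgroup : subgroup Gam.
Hypothesis D_Gam : forall g, Gam g -> Gam (D g).
Hypothesis D_morph : forall x y, D (gmul x y) = gmul (D x) (D y).
Hypothesis D_inj : forall x y, D x = D y -> x = y.
Hypothesis D_surj : forall y, exists x, D x = y.
Hypothesis V_tiling : forall g, exists! γ, Gam γ /\ V (gmul (ginv γ) g).
Hypothesis S0_supp : forall a x, S0 a x <> None <-> (Gam x /\ img D V x).

Local Notation S := (subst D Gam V S0).
Local Notation supported_in_Gam P := (forall x, P x <> None -> Gam x).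

Lemma Gam1 : Gam gone.
Proof. apply Gam_subgroup. Qed.

Lemma GamM x y : Gam x -> Gam y -> Gam (gmul x y).
Proof. apply Gam_subgroup. Qed.

Lemma GamV x : Gam x -> Gam (ginv x).
Proof. apply Gam_subgroup. Qed.

Lemma GamMl x y : Gam x -> Gam (gmul x y) -> Gam y.
Proof. intros Hx Hxy. rewrite <- (mulKg x y). auto using GamM, GamV. Qed.

Lemma V1_Vn : V gone -> forall n, Vn D Gam V n gone.
Proof.
  intros V1. induction n as [|n IH]; simpl; auto.
  exists gone, gone. rewrite gmul_1l, (morph1 D_morph). auto using Gam1.
Qed.

Lemma Gam_decomp γ :
  Gam γ -> exists η δ, Gam η /\ Gam δ /\ img D V δ /\ γ = gmul (D η) δ.
Proof.
  intros Hγ. destruct (D_surj γ) as [u <-]. destruct (V_tiling u) as [η [[Hη Hv] _]].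
  exists η, (D (gmul (ginv η) u)).
  assert (Eu : D u = gmul (D η) (D (gmul (ginv η) u))) by (rewrite <- D_morph, mulKVg; auto).
  repeat split; auto.
  - apply (GamMl (D η)); [auto | congruence].
  - exists (gmul (ginv η) u); auto.
Qed.

Lemma subst_outside P y : supported_in_Gam P -> ~ Gam y -> S P y = None.
Proof.
  intros HP Hy. unfold subst.
  destruct (excluded_middle_informative _) as [Hex | _]; [|reflexivity].
  exfalso. destruct Hex as [η [Hη [Hz _]]]. apply Hy. rewrite <- (mulKVg (D η) y). auto using GamM.
Qed.

(** The tile η of a supported patch is the only one whose inflation covers D η · z. *)
Lemma subst_tile P η z a :
  supported_in_Gam P -> P η = Some a -> Gam z -> img D V z ->
  S P (gmul (D η) z) = S0 a z.
Proof.
  intros HP Hη Hz HVz. unfold subst.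
  destruct (excluded_middle_informative _) as [Hex | Hnex].
  - destruct (constructive_indefinite_description _ Hex) as [η' [Hη' [HG' HV']]]; simpl.
    assert (η' = η) as ->.
    { destruct HVz as [v [Hv Ev]], HV' as [v' [Hv' Ev']].
      assert (E : gmul η v = gmul η' v').
      { apply D_inj. rewrite !D_morph, <- Ev, <- Ev', mulKVg. reflexivity. }
      destruct (V_tiling (gmul η v)) as [c [_ Hc]].
      transitivity c; [symmetry|]; apply Hc; split.
      - auto.
      - rewrite E, mulKg. assumption.
      - apply HP. congruence.
      - rewrite mulKg. assumption. }
    rewrite Hη, mulKg. reflexivity.
  - exfalso. apply Hnex. exists η. unfold subst_cond. rewrite mulKg.
    repeat split; auto. congruence.
Qed.

Lemma subst_tile1 P z a :
  supported_in_Gam P -> P gone = Some a -> Gam z -> img D V z -> S P z = S0 a z.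
Proof.
  intros HP Ha Hz HVz. rewrite <- (gmul_1l G z) at 1. rewrite <- (morph1 D_morph).
  apply subst_tile; assumption.
Qed.

Lemma subst_configuration w : configuration Gam w -> configuration Gam (S w).
Proof.
  intros Hw y. split.
  - intros Hy. apply NNPP. intros Hny. apply Hy, subst_outside; [apply Hw | exact Hny].
  - intros Hy. destruct (Gam_decomp _ Hy) as [η [δ [Hη [Hδ [HVδ ->]]]]].
    destruct (configuration_Some Hw Hη) as [a Ha].
    rewrite (subst_tile _ _ _ _ (fun x => proj1 (Hw x)) Ha Hδ HVδ). apply S0_supp. auto.
Qed.

Lemma iter_subst_configuration n w :
  configuration Gam w -> configuration Gam (Nat.iter n S w).
Proof. intros Hw. induction n; simpl; auto using subst_configuration. Qed.

Lemma Pa_supported c : supported_in_Gam (@Pa G A c).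
Proof.
  intros x. unfold Pa. destruct (excluded_middle_informative _) as [->|]; [|congruence].
  intros _. apply Gam1.
Qed.

Lemma Pa1 c : @Pa G A c gone = Some c.
Proof. unfold Pa. destruct (excluded_middle_informative _); congruence. Qed.

Hypothesis S0_inj : forall a b, S0 a = S0 b -> a = b.
Hypothesis S0_nonperiodic : forall (γ : G) (a b : A), Gam γ -> img D V γ -> γ <> gone ->
  let F := fun x => img (fun y => gmul (ginv γ) y) (img D V) x /\ img D V x in
  restrict (act (ginv γ) (S (Pa a))) F <> restrict (S (Pa b)) F.

Lemma S0_separates a b : a <> b -> exists z, Gam z /\ img D V z /\ S0 a z <> S0 b z.
Proof.
  intros Hab. destruct (fun_neq_witness (S0 a) (S0 b)) as [z Hz].
  { intros E. apply Hab, S0_inj, E. }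
  exists z. destruct (classic (Gam z /\ img D V z)) as [[? ?]|Hout]; [auto|].
  exfalso. apply Hz. transitivity (@None A); [|symmetry];
    apply NNPP; intros Hsome; apply Hout; eapply S0_supp; eassumption.
Qed.

Lemma S0_offset_separates δ a b :
  Gam δ -> img D V δ -> δ <> gone ->
  exists x, Gam x /\ img D V x /\ img D V (gmul δ x) /\ S0 a (gmul δ x) <> S0 b x.
Proof.
  intros Hδ HVδ Hδ1. destruct (fun_neq_witness _ _ (S0_nonperiodic δ a b Hδ HVδ Hδ1)) as [x Hx].
  unfold restrict, act in Hx. rewrite invgK in Hx.
  destruct (excluded_middle_informative _) as [[[y [HVy ->]] HVx] | _]; [|congruence].
  rewrite mulKVg in Hx.
  assert (Hx_Gam : Gam (gmul (ginv δ) y)).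
  { apply NNPP. intros Hout. apply Hx.
    assert (Hy_out : ~ Gam y) by (intros Hy; apply Hout; auto using GamM, GamV).
    rewrite !subst_outside; try apply Pa_supported; auto. }
  assert (Hy : Gam y) by (rewrite <- (mulKVg δ y); auto using GamM).
  exists (gmul (ginv δ) y). rewrite mulKVg. repeat split; auto.
  rewrite <- (subst_tile1 (Pa a)), <- (subst_tile1 (Pa b)); try apply Pa_supported; auto using Pa1.
Qed.

Definition differ_on_Vn n (W1 W2 : @patch G A) γ : Prop :=
  exists x, Vn D Gam V n x /\ Gam x /\ W1 (gmul γ x) <> W2 x.

Lemma subst_differ_dil n W1 W2 η :
  Gam η -> configuration Gam W1 -> configuration Gam W2 ->
  differ_on_Vn n W1 W2 η -> differ_on_Vn (Datatypes.S n) (S W1) (S W2) (D η).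
Proof.
  intros Hη C1 C2 [x [Vx [Hx Hneq]]].
  destruct (configuration_Some C1 (GamM _ _ Hη Hx)) as [a Ha].
  destruct (configuration_Some C2 Hx) as [b Hb].
  destruct (S0_separates a b) as [z [Hz [[v [Hv ->]] Hab]]]; [congruence|].
  exists (gmul (D x) (D v)). repeat split.
  - exists x, v. rewrite D_morph. auto.
  - auto using GamM.
  - rewrite gmul_assoc, <- D_morph, !(subst_tile _ _ _ _ (fun y => proj1 (C1 y)) Ha),
      (subst_tile _ _ _ _ (fun y => proj1 (C2 y)) Hb); auto.
    all: exists v; auto.
Qed.

Hypothesis V1 : V gone.

Lemma subst_differ_offset n W1 W2 η δ :
  Gam η -> Gam δ -> img D V δ -> δ <> gone ->
  configuration Gam W1 -> configuration Gam W2 ->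
  differ_on_Vn (Datatypes.S n) (S W1) (S W2) (gmul (D η) δ).
Proof.
  intros Hη Hδ HVδ Hδ1 C1 C2.
  destruct (configuration_Some C1 Hη) as [a Ha].
  destruct (configuration_Some C2 Gam1) as [b Hb].
  destruct (S0_offset_separates _ a b Hδ HVδ Hδ1) as [x [Hx [HVx [HVδx Hab]]]].
  exists x. repeat split; auto.
  - destruct HVx as [v [Hv ->]]. exists gone, v. rewrite gmul_1l. auto using V1_Vn, Gam1.
  - rewrite <- gmul_assoc, (subst_tile _ _ _ _ (fun y => proj1 (C1 y)) Ha),
      (subst_tile1 _ _ _ (fun y => proj1 (C2 y)) Hb); auto using GamM.
Qed.

Lemma iter_subst_differ w1 w2 :
  configuration Gam w1 -> configuration Gam w2 ->
  forall n γ, Gam γ -> ~ img (Nat.iter n D) Gam γ ->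
  differ_on_Vn n (Nat.iter n S w1) (Nat.iter n S w2) γ.
Proof.
  intros C1 C2. induction n as [|n IH]; intros γ Hγ Hnot.
  { exfalso. apply Hnot. exists γ. auto. }
  pose proof (iter_subst_configuration n _ C1) as Cn1.
  pose proof (iter_subst_configuration n _ C2) as Cn2.
  destruct (Gam_decomp _ Hγ) as [η [δ [Hη [Hδ [HVδ ->]]]]]. simpl.
  destruct (classic (δ = gone)) as [-> | Hδ1].
  - rewrite mulg1 in Hnot |- *. apply subst_differ_dil; auto.
    apply IH; auto. intros [ζ [Hζ ->]]. apply Hnot. exists ζ. auto.
  - apply subst_differ_offset; auto.
Qed.

End Substitution.

Lemma substitution_datum_l0_pos {G : Group} {d : G -> G -> R} {Dil : R -> G -> G}
    {Gam V : G -> Prop} {A : Type} {l0 : R} {S0 : A -> @patch G A} :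
  substitution_datum d Dil Gam V l0 S0 -> 0 < l0.
Proof.
  intros HS. destruct (sd_l0 HS) as [rm [rp [Hrm [Hrmp [_ [_ Hl0]]]]]].
  assert (0 < rp / rm) by (apply Rdiv_lt_0_compat; lra). lra.
Qed.

Theorem proposition7 (G : Group) (d : G -> G -> R) (Dil : R -> G -> G)
    (Gam V : G -> Prop) (A : Type) (l0 : R) (S0 : A -> @patch G A) :
  @dilation_datum G d Dil Gam V ->
  @substitution_datum G d Dil Gam V A l0 S0 ->
  @nonperiodic G Dil Gam V A l0 S0 ->
  forall (n : nat) (γ : G) (w1 w2 : @patch G A),
    Gam γ -> ~ img (Nat.iter n (Dil l0)) Gam γ ->
    configuration Gam w1 -> configuration Gam w2 ->
    restrict (act (ginv γ) (Nat.iter n (subst (Dil l0) Gam V S0) w1))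
             (fun x => Vn (Dil l0) Gam V n x /\ Gam x) <>
    restrict (Nat.iter n (subst (Dil l0) Gam V S0) w2)
             (fun x => Vn (Dil l0) Gam V n x /\ Gam x).
Proof.
  intros HD HS [S0_inj S0_nonperiodic] n γ w1 w2 Hγ Hnot C1 C2 Heq.
  destruct (dd_aut HD (substitution_datum_l0_pos HS)) as [D_morph [Dinv [DinvK DKinv]]].
  assert (D_inj : forall x y, Dil l0 x = Dil l0 y -> x = y).
  { intros x y E. rewrite <- (DinvK x), <- (DinvK y), E. reflexivity. }
  assert (D_surj : forall y, exists x, Dil l0 x = y) by (intros y; exists (Dinv y); auto).
  assert (V1 : V gone) by (destruct (dd_V_nbhd HD) as [U [_ [U1 UV]]]; auto).
  destruct (iter_subst_differ _ _ _ _ _ _ (proj1 (dd_lattice HD)) (sd_DGam HS) D_morph D_inj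
              D_surj (dd_tiling HD) (sd_S0_supp HS) S0_inj S0_nonperiodic V1 _ _ C1 C2 n γ Hγ Hnot)
    as [x [Vx [Hx Hneq]]].
  apply Hneq. apply (f_equal (fun w => w x)) in Heq. unfold restrict, act in Heq.
  rewrite invgK in Heq.
  destruct (excluded_middle_informative _) as [_ | Hout]; [exact Heq | tauto].
Qed.
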